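(* Let $A[0\ldots n-1]$, $B[0\ldots m-1]$ be sequences over a totally ordered alphabet, let $V=\{(i,j)\mid A[i]=B[j]\}$ and $E=\{(u,v)\mid u=(i,j),\,v=(i',j')\in V,\ i<i',\ j<j',\ A[i]<A[i']\}$. In the forward pass of the sparse-DAG algorithm described in the context, immediately after the update of a vertex $v$ one has $INC[v]=1+\max_{(u,v)\in E}INC[u]$ (the maximum over an empty set being $0$). Analogously, in the backward pass, immediately after the update of $v=(i,j)$ one has $DEC[v]=1+\max DEC[w]$, the maximum taken over all $w=(i',j')\in V$ with $i<i'$, $j<j'$ and $A[i']<A[i]$ (empty maximum $0$).
   Context: Sparse-DAG algorithm: list all pairs $(i,j)\in V$ and sort them lexicographically by $(i$ ascending, $j$ ascending$)$. For each vertex $v=(i,j)$ let $r_J(v)$ be $1$ plus the rank of $j$ among the distinct column indices occurring in $V$, and $r_V(v)$ the rank (starting at $1$) of the value $A[i]$ among the sorted distinct values of $A\cup B$; let $MAX_J=\max_v r_J(v)$. A 2-D range structure stores points with integer keys $(x,y)$ and values, supports $\textsc{Query}(a,b)$ returning the maximum value over stored points with $x\le a$ and $y\le b$ (or $0$ if none), and $\textsc{Update}((x,y),val)$ inserting a point. Forward pass: starting from an empty structure, for each vertex $v$ in sorted order set $INC[v]\gets\textsc{Query}(r_J(v)-1,r_V(v)-1)+1$ and then $\textsc{Update}((r_J(v),r_V(v)),INC[v])$. Backward pass: starting from a new empty structure, for each vertex $v$ in reverse sorted order let $\widehat r_J(v)=MAX_J-r_J(v)+1$, set $DEC[v]\gets\textsc{Query}(\widehat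 r_J(v)-1,r_V(v)-1)+1$ and then $\textsc{Update}((\widehat r_J(v),r_V(v)),DEC[v])$. *)

From mathcomp Require Import all_boot all_order.
Set Implicit Arguments. Unset Strict Implicit. Unset Printing Implicit Defensive.
Import Order.TTheory.

Section SparseDAG.
Variables (d : Order.disp_t) (T : orderType d) (n m : nat).
Variables (A : 'I_n -> T) (B : 'I_m -> T).

Definition vertex := ('I_n * 'I_m)%type.

Definition Vs : seq vertex :=
  [seq (i, j) | i <- enum 'I_n, j <- [seq j <- enum 'I_m | A i == B j]].

Definition edge (u v : vertex) : bool :=
  [&& (u.1 < v.1)%N, (u.2 < v.2)%N & (A u.1 < A v.1)%O].

Definition cols : seq nat := undup [seq (nat_of_ord v.2) | v <- Vs].
Definition rJ (v : vertex) : nat := (count (fun c => c < v.2) cols).+1.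

Definition vals : seq T := undup ([seq A i | i <- enum 'I_n] ++ [seq B j | j <- enum 'I_m]).
Definition rV (v : vertex) : nat := (count (fun t => (t < A v.1)%O) vals).+1.

Definition MAXJ : nat := \max_(v <- Vs) rJ v.

(* 2-D range structure: the list of stored points ((x,y), val). *)
Definition store := seq ((nat * nat) * nat).
Definition query (S : store) (a b : nat) : nat :=
  \max_(p <- S | (p.1.1 <= a) && (p.1.2 <= b)) p.2.
Definition update (S : store) (xy : nat * nat) (val : nat) : store :=
  rcons S (xy, val).

Definition pass_step (key : vertex -> nat * nat)
    (st : store * seq (vertex * nat)) (v : vertex) :=
  let: (St, L) := st in
  let: (x, y) := key v in
  let val := (query St (x - 1) (y - 1)).+1 in
  (update St (x, y) val, rcons L (v, val)).

Definition run_pass (key : vertex -> nat * nat) (order : seq vertex) :=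
  (foldl (pass_step key) ([::], [::]) order).2.

Definition lookup (L : seq (vertex * nat)) (v : vertex) : nat :=
  nth 0 (map snd L) (index v (map fst L)).

Definition INC (v : vertex) : nat :=
  lookup (run_pass (fun u => (rJ u, rV u)) Vs) v.

Definition DEC (v : vertex) : nat :=
  lookup (run_pass (fun u => (MAXJ - rJ u + 1, rV u)) (rev Vs)) v.

End SparseDAG.

From mathcomp Require Import all_boot all_order.
Import Order.TTheory.

Set Implicit Arguments.
Unset Strict Implicit.
Unset Printing Implicit Defensive.

(* Both passes are one generic loop: a vertex v receives one plus the largest
   value stored so far at a point whose key is strictly below the key of v in
   both coordinates (keys are positive, so querying at (x - 1, y - 1) is strict
   domination).  Hence its value is 1 + max over the vertices u processed before
   v with key u < key v coordinatewise.  The ranks r_J and r_V are strictly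
   monotone, so key comparisons become comparisons of columns and of letters.
   V is listed lexicographically, so the vertices before v lie in earlier rows
   or in the row of v; the latter are excluded because a row carries a single
   letter A[i] and the letters must compare strictly.  The backward pass is the
   same argument for the reversed list with the column rank reversed. *)

Section Lookup.
Variables (n m : nat).
Implicit Types (L : seq (vertex n m * nat)) (u v : vertex n m).

Lemma lookup_cat_l L1 L2 u :
  u \in map fst L1 -> lookup (L1 ++ L2) u = lookup L1 u.
Proof.
move=> u_L1; rewrite /lookup !map_cat index_cat u_L1 nth_cat size_map.
by rewrite -(size_map fst) index_mem u_L1.
Qed.

Lemma lookup_cat_head L1 L2 v x :
  v \notin map fst L1 -> lookup (L1 ++ (v, x) :: L2) v = x.
Proof.
move=> v_L1; rewrite /lookup !map_cat /= index_cat (negbTE v_L1) /= eqxx.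
by rewrite addn0 nth_cat !size_map ltnn subnn.
Qed.

Lemma lookup_graph L :
  uniq (map fst L) -> [seq (u, lookup L u) | u <- map fst L] = L.
Proof.
elim: L => [|[u x] L IH] //= /andP[u_L uniq_L].
rewrite {1}/lookup /= eqxx; congr cons.
rewrite -[RHS](IH uniq_L); apply/eq_in_map => w w_L.
by rewrite /lookup /=; case: eqP => // eq_uw; rewrite eq_uw w_L in u_L.
Qed.

End Lookup.

Section RangeMaxPass.
Variables (n m : nat) (key : vertex n m -> nat * nat).
Implicit Types (s : seq (vertex n m)) (L : seq (vertex n m * nat)) (u v : vertex n m).

Definition store_of L : store := [seq (key x.1, x.2) | x <- L].

Definition pass_value L v : nat :=
  (query (store_of L) ((key v).1 - 1) ((key v).2 - 1)).+1.

Lemma foldl_pass_step s :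
  foldl (pass_step key) ([::], [::]) s = (store_of (run_pass key s), run_pass key s).
Proof.
elim/last_ind: s => [|s v IH] //.
rewrite /run_pass !foldl_rcons IH /=.
by case E: (key v) => [x y]; rewrite /store_of /update map_rcons /= E.
Qed.

Lemma run_pass_rcons s v :
  run_pass key (rcons s v) = rcons (run_pass key s) (v, pass_value (run_pass key s) v).
Proof.
rewrite {1}/run_pass foldl_rcons foldl_pass_step /pass_value /=.
by case: (key v).
Qed.

Lemma run_pass_keys s : map fst (run_pass key s) = s.
Proof.
by elim/last_ind: s => [|s v IH] //; rewrite run_pass_rcons map_rcons IH.
Qed.

Lemma run_pass_prefix s1 s2 : exists L, run_pass key (s1 ++ s2) = run_pass key s1 ++ L.
Proof.
elim/last_ind: s2 => [|s2 v [L IH]]; first by exists [::]; rewrite !cats0.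
by exists (rcons L (v, pass_value (run_pass key (s1 ++ s2)) v));
  rewrite -rcons_cat run_pass_rcons IH rcons_cat.
Qed.

Definition key_lt u v : bool := ((key u).1 < (key v).1) && ((key u).2 < (key v).2).

Lemma run_pass_lookup s1 v s2 :
  uniq (s1 ++ v :: s2) -> 0 < (key v).1 -> 0 < (key v).2 ->
  let L := run_pass key (s1 ++ v :: s2) in
  lookup L v = (\max_(u <- s1 | key_lt u v) lookup L u).+1.
Proof.
move=> uniq_s key1_gt0 key2_gt0 L.
have [L2 def_L] := run_pass_prefix (rcons s1 v) s2.
rewrite cat_rcons run_pass_rcons cat_rcons in def_L.
set L1 := run_pass key s1 in def_L.
have keys_L1 : map fst L1 = s1 by exact: run_pass_keys.
have v_s1 : v \notin s1 by move: uniq_s; rewrite cat_uniq /= => /and3P[_ /norP[]].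
have uniq_L1 : uniq (map fst L1) by move: uniq_s; rewrite keys_L1 cat_uniq => /andP[].
have lookup_v : lookup L v = pass_value L1 v by rewrite /L def_L lookup_cat_head ?keys_L1.
have lookup_s1 : {in s1, lookup L =1 lookup L1}.
  by move=> u u_s1; rewrite /L def_L lookup_cat_l ?keys_L1.
rewrite lookup_v big_seq_cond.
rewrite (eq_bigr (lookup L1)) => [|u /andP[u_s1 _]]; last exact: lookup_s1.
rewrite -big_seq_cond /pass_value /query /store_of big_map.
rewrite -[in LHS](lookup_graph uniq_L1) keys_L1 big_map; congr S.
by apply: eq_bigl => u; rewrite /key_lt !leq_subRL // !add1n.
Qed.

Lemma run_pass_lookup_max s1 v s2 (P : pred (vertex n m)) :
  uniq (s1 ++ v :: s2) -> 0 < (key v).1 -> 0 < (key v).2 ->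
  {in s1, forall u, P u = key_lt u v} -> {in v :: s2, forall u, P u = false} ->
  let L := run_pass key (s1 ++ v :: s2) in
  lookup L v = 1 + \max_(u <- s1 ++ v :: s2 | P u) lookup L u.
Proof.
move=> uniq_s key1_gt0 key2_gt0 P_s1 P_s2 L.
rewrite big_cat /= [X in maxn _ X]big1_seq => [|u /andP[Pu u_s2]]; last first.
  by rewrite P_s2 in Pu.
rewrite maxn0 add1n run_pass_lookup //; congr S.
rewrite [LHS]big_seq_cond [RHS]big_seq_cond; apply: eq_bigl => u.
by case u_s1: (u \in s1); rewrite //= P_s1.
Qed.

End RangeMaxPass.

Lemma count_lt_split (d : Order.disp_t) (T : orderType d) (s : seq T) (x y : T) :
  (x < y)%O -> count (fun t => t < y)%O s =
                count (fun t => t < x)%O s + count (fun t => x <= t < y)%O s.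
Proof.
move=> lt_xy; elim: s => //= t s ->.
case: (ltP t x) => [lt_tx | le_xt] /=; first by rewrite (lt_trans lt_tx lt_xy) addnA.
by rewrite addnCA.
Qed.

Lemma ltn_count_lt (d : Order.disp_t) (T : orderType d) (s : seq T) (x y : T) :
  x \in s -> (count (fun t => t < x)%O s < count (fun t => t < y)%O s) = (x < y)%O.
Proof.
move=> x_s; case: (ltP x y) => [lt_xy | le_yx].
  rewrite (count_lt_split s lt_xy) -[X in X < _]addn0 ltn_add2l -has_count.
  by apply/hasP; exists x; rewrite ?lexx.
by rewrite ltnNge sub_count // => t /= lt_ty; apply: lt_le_trans lt_ty le_yx.
Qed.

Lemma pairwise_ltn_enum_ord k : pairwise (fun a b : 'I_k => a < b) (enum 'I_k).
Proof.
have := iota_ltn_sorted 0 k.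
by rewrite -val_enum_ord (sorted_pairwise ltn_trans) pairwise_map.
Qed.

Section SparseDAGOrder.
Variables (d : Order.disp_t) (T : orderType d) (n m : nat).
Variables (A : 'I_n -> T) (B : 'I_m -> T).
Implicit Types (u v w : vertex n m).

Definition lex_lt u v : bool := (u.1 < v.1) || ((u.1 == v.1) && (u.2 < v.2)).

Lemma lex_lt_leq u v : lex_lt u v -> u.1 <= v.1.
Proof. by case/orP=> [/ltnW | /andP[/eqP-> _]]. Qed.

Lemma lex_lt_row u v : lex_lt u v -> A u.1 != A v.1 -> u.1 < v.1.
Proof. by case/orP=> [// | /andP[/eqP-> _]]; rewrite eqxx. Qed.

Lemma pairwise_lex_Vs : pairwise lex_lt (Vs A B).
Proof.
rewrite /Vs; elim: (enum 'I_n) (pairwise_ltn_enum_ord n) => //= i s IH /andP[i_lt_s pw_s].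
rewrite pairwise_cat (IH pw_s) andbT pairwise_map; apply/andP; split.
  apply/allrelP => _ _ /mapP[j _ ->] /allpairsPdep[i' [j' [i'_s _ ->]]].
  by rewrite /lex_lt /= (allP i_lt_s i' i'_s).
apply: sub_pairwise (pairwise_filter _ (pairwise_ltn_enum_ord m)) => j j' /= lt_jj'.
by rewrite /lex_lt /= ltnn eqxx.
Qed.

Lemma uniq_Vs : uniq (Vs A B).
Proof. by apply: pairwise_uniq pairwise_lex_Vs => u; rewrite /lex_lt !ltnn eqxx. Qed.

Lemma mem_Vs_split v : v \in Vs A B ->
  exists s1 s2, [/\ Vs A B = s1 ++ v :: s2,
                    {in s1, forall u, lex_lt u v} & {in s2, forall w, lex_lt v w}].
Proof.
case/splitPr def_Vs: _ / => [s1 s2]; exists s1, s2.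
have := pairwise_lex_Vs; rewrite def_Vs pairwise_cat /= => /and3P[s1_v _ /andP[v_s2 _]].
by split=> // [u u_s1 |]; [apply: (allrelP s1_v) u_s1 (mem_head _ _) | apply/allP].
Qed.

Lemma ltn_rJ u v : u \in Vs A B -> (rJ A B u < rJ A B v) = (u.2 < v.2).
Proof.
move=> u_Vs; have u_cols : nat_of_ord u.2 \in cols A B.
  by rewrite mem_undup (map_f (fun w : vertex n m => nat_of_ord w.2)).
have := ltn_count_lt (v.2 : nat) u_cols.
by rewrite /rJ ltnS !ltEnat.
Qed.

Lemma ltn_rV u v : (rV A B u < rV A B v) = (A u.1 < A v.1)%O.
Proof. by rewrite /rV ltnS ltn_count_lt // mem_undup mem_cat map_f ?mem_enum. Qed.

Lemma ltn_rev_rJ u v : u \in Vs A B -> v \in Vs A B ->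
  (MAXJ A B - rJ A B u + 1 < MAXJ A B - rJ A B v + 1) = (v.2 < u.2).
Proof.
move=> u_Vs v_Vs; have rJ_le_max : rJ A B u <= MAXJ A B by apply: leq_bigmax_seq.
by rewrite ltn_add2r ltn_sub2lE // ltn_rJ.
Qed.

Lemma INC_max_edge v : v \in Vs A B ->
  INC A B v = 1 + \max_(u <- Vs A B | edge A u v) INC A B u.
Proof.
case/mem_Vs_split=> s1 [s2 [def_Vs before_v after_v]].
rewrite /INC def_Vs; apply: run_pass_lookup_max => // [|u u_s1 | u].
- by rewrite -def_Vs uniq_Vs.
- have u_Vs : u \in Vs A B by rewrite def_Vs mem_cat u_s1.
  rewrite /key_lt /= ltn_rJ // ltn_rV /edge.
  case: (ltP (A u.1) (A v.1)) => [lt_Auv | _]; last by rewrite !andbF.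
  by rewrite (lex_lt_row (before_v u u_s1)) ?lt_eqF ?andbT.
- rewrite inE => /predU1P[-> | u_s2]; first by rewrite /edge ltnn.
  by rewrite /edge ltnNge (lex_lt_leq (after_v u u_s2)).
Qed.

Lemma DEC_max_descent v : v \in Vs A B ->
  DEC A B v = 1 + \max_(w <- Vs A B | [&& v.1 < w.1, v.2 < w.2 & (A w.1 < A v.1)%O])
                    DEC A B w.
Proof.
move=> v_Vs; have [s1 [s2 [def_Vs before_v after_v]]] := mem_Vs_split v_Vs.
have rev_Vs : rev (Vs A B) = rev s2 ++ v :: rev s1.
  by rewrite def_Vs rev_cat rev_cons cat_rcons.
have perm_Vs : perm_eq (Vs A B) (rev (Vs A B)) by rewrite perm_sym perm_rev.
rewrite /DEC (perm_big _ perm_Vs) rev_Vs.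
apply: run_pass_lookup_max => // [||w | w].
- by rewrite -rev_Vs rev_uniq uniq_Vs.
- by rewrite addn1.
- rewrite mem_rev => w_s2.
  have w_Vs : w \in Vs A B by rewrite def_Vs mem_cat in_cons w_s2 !orbT.
  rewrite /key_lt /= ltn_rev_rJ // ltn_rV.
  case: (ltP (A w.1) (A v.1)) => [lt_Awv | _]; last by rewrite !andbF.
  by rewrite (lex_lt_row (after_v w w_s2)) ?gt_eqF ?andbT.
- rewrite inE mem_rev => /predU1P[-> | w_s1]; first by rewrite ltnn.
  by rewrite ltnNge (lex_lt_leq (before_v w w_s1)).
Qed.

End SparseDAGOrder.

Theorem mainTheorem6 (d : Order.disp_t) (T : orderType d) (n m : nat)
    (A : 'I_n -> T) (B : 'I_m -> T) (v : vertex n m) :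
  v \in Vs A B ->
  INC A B v = (1 + \max_(u <- Vs A B | edge A u v) INC A B u)%N /\
  DEC A B v = (1 + \max_(w <- Vs A B | [&& (v.1 < w.1)%N, (v.2 < w.2)%N
                                          & (A w.1 < A v.1)%O]) DEC A B w)%N.
Proof. by move=> v_Vs; split; [apply: INC_max_edge | apply: DEC_max_descent]. Qed.
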